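(* Under Assumption 1, let $c:[0,\infty)\to(0,\infty)$ and $s:[0,\infty)\to[0,\infty)$ be continuously differentiable, with $c(0)=c_0$ and $s(0)=s_0$, and let $\tilde\Phi$, $\tilde{\mathcal{D}}(t)$ and $\tilde{\mathbf{z}}^\star(t)=\arg\min_{\mathbf{x}\in\tilde{\mathcal{D}}(t)}\tilde\Phi(\mathbf{x},t)$ be as defined below. Let $\mathbf{x}_0\in\mathbb{R}^n$ be arbitrary and $$s_0=\begin{cases}0 & \text{if } \max_i f_i(\mathbf{x}_0,0)\le 0,\\ \max_i f_i(\mathbf{x}_0,0)+\varepsilon & \text{if } \max_i f_i(\mathbf{x}_0,0)>0,\end{cases}$$ for some $\varepsilon>0$. Let $\mathbf{P}\in\mathbb{S}^n_{++}$ with $\mathbf{P}\succeq\sigma\mathbf{I}_n$, $\sigma>0$, and let $\tilde{\mathbf{z}}(t)$ solve $$\dot{\tilde{\mathbf{z}}}(t)=-\nabla_{\mathbf{x}\mathbf{x}}\tilde\Phi(\tilde{\mathbf{z}}(t),t)^{-1}\big(\mathbf{P}\nabla_{\mathbf{x}}\tilde\Phi(\tilde{\mathbf{z}}(t),t)+\nabla_{\mathbf{x}t}\tilde\Phi(\tilde{\mathbf{z}}(t),t)\big),\qquad\tilde{\mathbf{z}}(0)=\mathbf{x}_0,$$ with $\tilde{\mathbf{z}}(t)\in\tilde{\mathcal{D}}(t)$ for all $t\ge0$. Then there is $0\le C(\mathbf{x}_0,c_0,s_0,m)<\infty$ such that $$\|\tilde{\mathbf{z}}(t)-\tilde{\mathbf{z}}^\star(t)\|_2\le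 C(\mathbf{x}_0,c_0,s_0,m)\,e^{-\sigma t}\quad\text{for all }t\ge0.$$
   Context: Assumption 1: $f_0(\mathbf{x},t)$ and $f_i(\mathbf{x},t)$, $i=1,\dots,p$, are twice continuously differentiable in $\mathbf{x}$ and continuously differentiable in $t$ for $t\ge0$; $\nabla_{\mathbf{x}\mathbf{x}} f_0(\mathbf{x},t)\succeq m\mathbf{I}$ for some $m>0$; each $f_i(\cdot,t)$ is convex for all $t\ge0$. Perturbed barrier: $\tilde\Phi(\mathbf{x},t)=f_0(\mathbf{x},t)-\frac{1}{c(t)}\sum_{i=1}^p\log(s(t)-f_i(\mathbf{x},t))$ on $\tilde{\mathcal{D}}(t)=\{\mathbf{x}: f_i(\mathbf{x},t)<s(t),\ i=1,\dots,p\}$. $\nabla_{\mathbf{x}}$, $\nabla_{\mathbf{x}\mathbf{x}}$ denote gradient and Hessian in $\mathbf{x}$; $\nabla_{\mathbf{x}t}\tilde\Phi$ is the partial time derivative of $\nabla_{\mathbf{x}}\tilde\Phi$. *)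

From Stdlib Require Import Reals Lra.
From Stdlib Require Fin.
Open Scope R_scope.

Definition Vec (n : nat) := Fin.t n -> R.
Definition Mat (n : nat) := Fin.t n -> Fin.t n -> R.

Fixpoint sumF (n : nat) : (Fin.t n -> R) -> R :=
  match n return (Fin.t n -> R) -> R with
  | O => fun _ => 0
  | S k => fun g => g Fin.F1 + sumF k (fun i => g (Fin.FS i))
  end.

(* max over Fin.t n, with 0 as base value (only used through the sign
   test "max <= 0" and in the case "max > 0", where it is the true max) *)
Fixpoint maxF0 (n : nat) : (Fin.t n -> R) -> R :=
  match n return (Fin.t n -> R) -> R with
  | O => fun _ => 0
  | S k => fun g => Rmax (g Fin.F1) (maxF0 k (fun i => g (Fin.FS i)))
  end.

Definition vadd {n} (u v : Vec n) : Vec n := fun i => u i + v i.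
Definition vsub {n} (u v : Vec n) : Vec n := fun i => u i - v i.
Definition vscale {n} (a : R) (u : Vec n) : Vec n := fun i => a * u i.
Definition dot {n} (u v : Vec n) : R := sumF n (fun i => u i * v i).
Definition norm2 {n} (u : Vec n) : R := sqrt (dot u u).
Definition matvec {n} (A : Mat n) (v : Vec n) : Vec n :=
  fun i => sumF n (fun j => A i j * v j).

Definition has_grad {n} (g : Vec n -> R) (x G : Vec n) : Prop :=
  forall eps, 0 < eps -> exists delta, 0 < delta /\
    forall h : Vec n, norm2 h < delta ->
      Rabs (g (vadd x h) - g x - dot G h) <= eps * norm2 h.

Definition has_hess {n} (gr : Vec n -> Vec n) (x : Vec n) (H : Mat n) : Prop :=
  forall j, has_grad (fun y => gr y j) x (H j).

Definition has_deriv_nonneg (g : R -> R) (t l : R) : Prop :=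
  forall eps, 0 < eps -> exists delta, 0 < delta /\
    forall h, h <> 0 -> Rabs h < delta -> 0 <= t + h ->
      Rabs ((g (t + h) - g t) / h - l) < eps.

Definition cont_nonneg (g : R -> R) : Prop :=
  forall t, 0 <= t -> forall eps, 0 < eps -> exists delta, 0 < delta /\
    forall u, 0 <= u -> Rabs (u - t) < delta -> Rabs (g u - g t) < eps.

Definition cont_xt {n} (F : Vec n -> R -> R) : Prop :=
  forall x t, 0 <= t -> forall eps, 0 < eps -> exists delta, 0 < delta /\
    forall y u, 0 <= u -> norm2 (vsub y x) < delta -> Rabs (u - t) < delta ->
      Rabs (F y u - F x t) < eps.

Definition C2x_C1t {n} (f : Vec n -> R -> R) (gf : Vec n -> R -> Vec n)
    (Hf : Vec n -> R -> Mat n) (ft : Vec n -> R -> R) : Prop :=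
  (forall x t, 0 <= t -> has_grad (fun y => f y t) x (gf x t)) /\
  (forall x t, 0 <= t -> has_hess (fun y => gf y t) x (Hf x t)) /\
  (forall x t, 0 <= t -> has_deriv_nonneg (fun u => f x u) t (ft x t)) /\
  cont_xt f /\ (forall j, cont_xt (fun x t => gf x t j)) /\
  (forall j k, cont_xt (fun x t => Hf x t j k)) /\ cont_xt ft.

Definition convex_fun {n} (g : Vec n -> R) : Prop :=
  forall x y a, 0 <= a <= 1 ->
    g (vadd (vscale a x) (vscale (1 - a) y)) <= a * g x + (1 - a) * g y.

Definition psd_lb {n} (A : Mat n) (m : R) : Prop :=
  (forall i j, A i j = A j i) /\ forall v : Vec n, m * dot v v <= dot v (matvec A v).

Definition Phi_t {n p} (f0 : Vec n -> R -> R) (f : Fin.t p -> Vec n -> R -> R)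
    (c s : R -> R) (x : Vec n) (t : R) : R :=
  f0 x t - / c t * sumF p (fun i => ln (s t - f i x t)).

Definition Dom_t {n p} (f : Fin.t p -> Vec n -> R -> R) (s : R -> R)
    (t : R) (x : Vec n) : Prop :=
  forall i, f i x t < s t.

(* Along the flow, u(t) = grad_x Phi(z(t), t) satisfies
   d/dt u = H zdot + grad_xt Phi = - P u, so e^(2 sigma t) |u(t)|^2 is
   nonincreasing and |u(t)| <= e^(-sigma t) |u(0)|.  Since f0(., t) is
   m-strongly convex and the log-barrier is convex, Phi(., t) is m-strongly
   convex on D(t); comparing with the minimiser z*(t) gives
   |z(t) - z*(t)| <= (2/m) |u(t)|.
   The derivative of u along the flow needs a chain rule, hence joint
   continuity of the Hessian of Phi in (x, t).  The hypotheses only give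
   this for f0 and the f_i, so the gradient of Phi is identified with its
   closed form, whose Jacobian is shown to be jointly continuous on the
   open set {(x, t) | t >= 0, x in D(t)}. *)

From Stdlib Require Import Reals Lra FunctionalExtensionality IndefiniteDescription.
From Stdlib Require Fin.
From Coquelicot Require Import Coquelicot.
Open Scope R_scope.

(** * Finite sums and Euclidean vectors *)

Lemma sumF_ext n (g h : Fin.t n -> R) : (forall i, g i = h i) -> sumF n g = sumF n h.
Proof.
  revert g h; induction n; intros g h H; simpl; auto.
  rewrite H; f_equal; apply IHn; auto.
Qed.

Lemma sumF_plus n (g h : Fin.t n -> R) :
  sumF n (fun i => g i + h i) = sumF n g + sumF n h.
Proof. revert g h; induction n; intros g h; simpl. lra. rewrite IHn; lra. Qed.

Lemma sumF_scal n a (g : Fin.t n -> R) : sumF n (fun i => a * g i) = a * sumF n g.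
Proof. revert g; induction n; intros g; simpl. lra. rewrite IHn; lra. Qed.

Lemma sumF_zero n : sumF n (fun _ => 0) = 0.
Proof. induction n; simpl; auto. rewrite IHn; lra. Qed.

Lemma sumF_opp n (g : Fin.t n -> R) : sumF n (fun i => - g i) = - sumF n g.
Proof.
  rewrite <- (sumF_ext n (fun i => -1 * g i)) by (intros; lra).
  rewrite sumF_scal; lra.
Qed.

Lemma sumF_minus n (g h : Fin.t n -> R) :
  sumF n (fun i => g i - h i) = sumF n g - sumF n h.
Proof.
  rewrite <- (sumF_ext n (fun i => g i + - h i)) by (intros; lra).
  rewrite sumF_plus, sumF_opp; lra.
Qed.

Lemma sumF_le n (g h : Fin.t n -> R) : (forall i, g i <= h i) -> sumF n g <= sumF n h.
Proof.
  revert g h; induction n; intros g h H; simpl. lra.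
  specialize (IHn (fun i => g (Fin.FS i)) (fun i => h (Fin.FS i)) (fun i => H (Fin.FS i))).
  specialize (H Fin.F1). lra.
Qed.

Lemma sumF_nonneg n (g : Fin.t n -> R) : (forall i, 0 <= g i) -> 0 <= sumF n g.
Proof. intros H. rewrite <- (sumF_zero n). apply sumF_le; auto. Qed.

Lemma sumF_le_const n (g : Fin.t n -> R) a : (forall i, g i <= a) -> sumF n g <= INR n * a.
Proof.
  revert g; induction n; intros g H; cbn [sumF]. simpl; lra.
  specialize (IHn (fun i => g (Fin.FS i)) (fun i => H (Fin.FS i))). specialize (H Fin.F1).
  rewrite S_INR. lra.
Qed.

Lemma sumF_delta n (g : Fin.t n -> R) (j : Fin.t n) :
  sumF n (fun i => g i * (if Fin.eq_dec i j then 1 else 0)) = g j.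
Proof.
  revert g j; induction n; intros g j. inversion j.
  pattern j; apply Fin.caseS'; simpl.
  - destruct (Fin.eq_dec Fin.F1 Fin.F1) as [_|C]; [|congruence].
    rewrite (sumF_ext n _ (fun _ => 0)), sumF_zero. lra.
    intros i. destruct (Fin.eq_dec (Fin.FS i) Fin.F1) as [E|_]. inversion E. lra.
  - intros j'. destruct (Fin.eq_dec Fin.F1 (Fin.FS j')) as [E|_]. inversion E.
    rewrite (sumF_ext n _ (fun i => g (Fin.FS i) * (if Fin.eq_dec i j' then 1 else 0))).
    rewrite IHn; lra.
    intros i. destruct (Fin.eq_dec (Fin.FS i) (Fin.FS j')) as [E|E];
      destruct (Fin.eq_dec i j') as [E'|E']; auto.
    + apply Fin.FS_inj in E; congruence.
    + subst; congruence.
Qed.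

Lemma exists_delta_fin n (Q : Fin.t n -> R -> Prop) :
  (forall i d d', 0 < d' <= d -> Q i d -> Q i d') ->
  (forall i, exists d, 0 < d /\ Q i d) -> exists d, 0 < d /\ forall i, Q i d.
Proof.
  revert Q; induction n; intros Q Hm H.
  - exists 1; split; [lra|]. intros i; inversion i.
  - destruct (IHn (fun i d => Q (Fin.FS i) d)) as [d1 [Hd1 H1]].
    { intros; eapply Hm; eauto. } { intros; apply H. }
    destruct (H Fin.F1) as [d0 [Hd0 H0]].
    assert (Hmin : 0 < Rmin d0 d1) by (apply Rmin_pos; auto).
    exists (Rmin d0 d1). split; auto.
    intros i. pattern i; apply Fin.caseS'.
    + eapply Hm; [|apply H0]. split; auto. apply Rmin_l.
    + intros j. eapply Hm; [|apply H1]. split; auto. apply Rmin_r.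
Qed.

Definition unit_vec {n} (j : Fin.t n) : Vec n := fun i => if Fin.eq_dec i j then 1 else 0.

Lemma dot_unit_vec n (G : Vec n) j : dot G (unit_vec j) = G j.
Proof. apply sumF_delta. Qed.

Lemma dot_comm n (u v : Vec n) : dot u v = dot v u.
Proof. unfold dot; apply sumF_ext; intros; ring. Qed.

Lemma dot_plus_l n (u v w : Vec n) : dot (vadd u v) w = dot u w + dot v w.
Proof. unfold dot, vadd. rewrite <- sumF_plus. apply sumF_ext; intros; ring. Qed.

Lemma dot_sub_l n (u v w : Vec n) : dot (vsub u v) w = dot u w - dot v w.
Proof. unfold dot, vsub. rewrite <- sumF_minus. apply sumF_ext; intros; ring. Qed.

Lemma dot_scal_l n a (u w : Vec n) : dot (vscale a u) w = a * dot u w.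
Proof. unfold dot, vscale. rewrite <- sumF_scal. apply sumF_ext; intros; ring. Qed.

Lemma dot_plus_r n (u v w : Vec n) : dot w (vadd u v) = dot w u + dot w v.
Proof. rewrite !(dot_comm _ w). apply dot_plus_l. Qed.

Lemma dot_sub_r n (u v w : Vec n) : dot w (vsub u v) = dot w u - dot w v.
Proof. rewrite !(dot_comm _ w). apply dot_sub_l. Qed.

Lemma dot_scal_r n a (u w : Vec n) : dot w (vscale a u) = a * dot w u.
Proof. rewrite !(dot_comm _ w). apply dot_scal_l. Qed.

Lemma dot_self_nonneg n (u : Vec n) : 0 <= dot u u.
Proof. apply sumF_nonneg; intros; nra. Qed.

Lemma dot_sq_le n (u v : Vec n) : (dot u v)^2 <= dot u u * dot v v.
Proof.
  assert (Hq : forall l, 0 <= dot u u - 2 * l * dot u v + l^2 * dot v v).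
  { intros l. assert (H := dot_self_nonneg n (vsub u (vscale l v))).
    rewrite dot_sub_l, !dot_sub_r, !dot_scal_l, !dot_scal_r, (dot_comm _ v u) in H. nra. }
  assert (Hu := dot_self_nonneg n u). assert (Hv := dot_self_nonneg n v).
  destruct (Req_dec (dot v v) 0) as [E|E].
  - destruct (Req_dec (dot u v) 0) as [E2|E2]. rewrite E2; nra.
    set (l := (dot u u + 1) / (2 * dot u v)). specialize (Hq l). rewrite E in Hq.
    assert (2 * l * dot u v = dot u u + 1) by (unfold l; field; auto). nra.
  - set (q := dot u v / dot v v). specialize (Hq q).
    assert (Eq : dot u v = q * dot v v) by (unfold q; field; auto).
    rewrite Eq in *. nra.
Qed.

Lemma norm2_nonneg n (u : Vec n) : 0 <= norm2 u.
Proof. apply sqrt_pos. Qed.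

Lemma norm2_sq n (u : Vec n) : norm2 u * norm2 u = dot u u.
Proof. apply sqrt_sqrt, dot_self_nonneg. Qed.

Lemma Rabs_dot_le n (u v : Vec n) : Rabs (dot u v) <= norm2 u * norm2 v.
Proof.
  unfold norm2. rewrite <- sqrt_mult by apply dot_self_nonneg.
  rewrite <- sqrt_Rsqr_abs. apply sqrt_le_1_alt. unfold Rsqr.
  assert (H := dot_sq_le n u v). lra.
Qed.

Lemma norm2_scal n a (u : Vec n) : norm2 (vscale a u) = Rabs a * norm2 u.
Proof.
  unfold norm2. rewrite dot_scal_l, dot_scal_r.
  replace (a * (a * dot u u)) with (Rsqr a * dot u u) by (unfold Rsqr; ring).
  rewrite sqrt_mult, sqrt_Rsqr_abs; auto using Rle_0_sqr, dot_self_nonneg.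
Qed.

Lemma norm2_triang n (u v : Vec n) : norm2 (vadd u v) <= norm2 u + norm2 v.
Proof.
  assert (H := Rabs_dot_le n u v). apply Rabs_le_between in H.
  assert (H1 := norm2_nonneg n u). assert (H2 := norm2_nonneg n v).
  assert (H3 := norm2_nonneg n (vadd u v)).
  assert (E : norm2 (vadd u v) * norm2 (vadd u v)
              = norm2 u * norm2 u + 2 * dot u v + norm2 v * norm2 v).
  { rewrite !norm2_sq, dot_plus_l, !dot_plus_r, (dot_comm _ v u). ring. }
  nra.
Qed.

Lemma norm2_sub_sym n (u v : Vec n) : norm2 (vsub u v) = norm2 (vsub v u).
Proof. unfold norm2, dot, vsub. f_equal. apply sumF_ext; intros; ring. Qed.

Lemma norm2_vsub_diag n (x : Vec n) : norm2 (vsub x x) = 0.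
Proof.
  unfold norm2, dot, vsub.
  rewrite (sumF_ext _ _ (fun _ => 0)), sumF_zero by (intros; ring). apply sqrt_0.
Qed.

Lemma norm2_unit_vec n (j : Fin.t n) : norm2 (unit_vec j) = 1.
Proof.
  unfold norm2. rewrite dot_unit_vec. unfold unit_vec.
  destruct (Fin.eq_dec j j); [apply sqrt_1|congruence].
Qed.

Lemma norm2_le_sum_abs n (v : Vec n) : norm2 v <= sumF n (fun i => Rabs (v i)).
Proof.
  assert (Hs : forall k (w : Vec k), 0 <= sumF k (fun i => Rabs (w i)))
    by (intros; apply sumF_nonneg; intros; apply Rabs_pos).
  assert (H : dot v v <= (sumF n (fun i => Rabs (v i)))^2).
  { unfold dot. induction n; simpl. lra.
    specialize (IHn (fun i => v (Fin.FS i))). simpl in IHn.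
    specialize (Hs n (fun i => v (Fin.FS i))).
    assert (0 <= Rabs (v Fin.F1)) by apply Rabs_pos.
    assert (v Fin.F1 * v Fin.F1 = Rabs (v Fin.F1) * Rabs (v Fin.F1))
      by (rewrite <- Rabs_mult, Rabs_pos_eq; nra).
    nra. }
  unfold norm2. rewrite <- (sqrt_pow2 (sumF n _)) by auto. apply sqrt_le_1_alt; auto.
Qed.

Lemma norm2_le_of_components n (v : Vec n) e : (forall i, Rabs (v i) < e) -> norm2 v <= INR n * e.
Proof.
  intros H. eapply Rle_trans. apply norm2_le_sum_abs.
  apply sumF_le_const. intros i; left; auto.
Qed.

Lemma vsub_vadd n (x h : Vec n) : vsub (vadd x h) x = h.
Proof. apply functional_extensionality; intros i; unfold vsub, vadd; ring. Qed.

Lemma INR_mult_frac k e : 0 < e -> INR k * (e / (INR k + 1)) < e.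
Proof.
  intros He. assert (H := pos_INR k).
  apply Rmult_lt_reg_r with (INR k + 1). lra. field_simplify; lra.
Qed.

(** * Gradients *)

Lemma has_grad_local_lipschitz n (g : Vec n -> R) x G : has_grad g x G ->
  exists d, 0 < d /\ forall h, norm2 h < d -> Rabs (g (vadd x h) - g x) <= (norm2 G + 1) * norm2 h.
Proof.
  intros H. destruct (H 1 Rlt_0_1) as [d [Hd Hh]]. exists d; split; auto.
  intros h Hn. specialize (Hh h Hn). assert (C := Rabs_dot_le n G h).
  replace (g (vadd x h) - g x) with ((g (vadd x h) - g x - dot G h) + dot G h) by ring.
  eapply Rle_trans. apply Rabs_triang. lra.
Qed.

Lemma has_grad_unique n (g : Vec n -> R) x G1 G2 :
  has_grad g x G1 -> has_grad g x G2 -> G1 = G2.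
Proof.
  intros H1 H2. apply functional_extensionality; intros j.
  destruct (Req_dec (G1 j - G2 j) 0) as [E0|E0]; [lra|exfalso].
  assert (Hlt : 0 < Rabs (G1 j - G2 j)) by (apply Rabs_pos_lt; auto).
  set (e := Rabs (G1 j - G2 j) / 4). assert (He : 0 < e) by (unfold e; lra).
  destruct (H1 e He) as [d1 [Hd1 K1]]. destruct (H2 e He) as [d2 [Hd2 K2]].
  assert (Hm1 := Rmin_l d1 d2). assert (Hm2 := Rmin_r d1 d2).
  set (r := Rmin d1 d2 / 2). assert (Hr : 0 < r) by (unfold r; assert (0 < Rmin d1 d2) by (apply Rmin_pos; auto); lra).
  set (h := vscale r (unit_vec j)).
  assert (Nh : norm2 h = r) by (unfold h; rewrite norm2_scal, norm2_unit_vec, Rabs_pos_eq; lra).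
  specialize (K1 h ltac:(unfold r in *; lra)). specialize (K2 h ltac:(unfold r in *; lra)).
  rewrite Nh in K1, K2. unfold h in K1, K2. rewrite dot_scal_r, dot_unit_vec in K1, K2.
  assert (H : Rabs (r * (G1 j - G2 j)) <= 2 * e * r).
  { set (gh := g (vadd x (vscale r (unit_vec j)))) in *.
    replace (r * (G1 j - G2 j)) with (- (gh - g x - r * G1 j) + (gh - g x - r * G2 j)) by ring.
    eapply Rle_trans. apply Rabs_triang. rewrite Rabs_Ropp. lra. }
  rewrite Rabs_mult, Rabs_pos_eq in H by lra. unfold e in H. nra.
Qed.

Lemma has_grad_eq_near n (g1 g2 : Vec n -> R) x G :
  (exists r, 0 < r /\ forall y, norm2 (vsub y x) < r -> g1 y = g2 y) ->
  has_grad g1 x G -> has_grad g2 x G.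
Proof.
  intros [r [Hr E]] H eps Heps. destruct (H eps Heps) as [d [Hd K]].
  assert (Hm1 := Rmin_l d r). assert (Hm2 := Rmin_r d r).
  exists (Rmin d r). split. apply Rmin_pos; auto. intros h Hh.
  rewrite <- !E. apply K; lra.
  rewrite norm2_vsub_diag; auto.
  rewrite vsub_vadd; lra.
Qed.

Lemma has_grad_const n (a : R) (x : Vec n) : has_grad (fun _ => a) x (fun _ => 0).
Proof.
  intros eps Heps. exists 1. split. lra. intros h _.
  unfold dot. rewrite (sumF_ext _ _ (fun _ => 0)), sumF_zero by (intros; ring).
  replace (a - a - 0) with 0 by ring. rewrite Rabs_R0.
  assert (H := norm2_nonneg n h). nra.
Qed.

Lemma has_grad_plus n (g1 g2 : Vec n -> R) x G1 G2 :
  has_grad g1 x G1 -> has_grad g2 x G2 -> has_grad (fun y => g1 y + g2 y) x (vadd G1 G2).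
Proof.
  intros H1 H2 eps Heps.
  destruct (H1 (eps/2) ltac:(lra)) as [d1 [Hd1 K1]].
  destruct (H2 (eps/2) ltac:(lra)) as [d2 [Hd2 K2]].
  assert (Hm1 := Rmin_l d1 d2). assert (Hm2 := Rmin_r d1 d2).
  exists (Rmin d1 d2). split. apply Rmin_pos; auto. intros h Hh.
  specialize (K1 h ltac:(lra)). specialize (K2 h ltac:(lra)). rewrite dot_plus_l.
  replace (g1 (vadd x h) + g2 (vadd x h) - (g1 x + g2 x) - (dot G1 h + dot G2 h)) with
    ((g1 (vadd x h) - g1 x - dot G1 h) + (g2 (vadd x h) - g2 x - dot G2 h)) by ring.
  eapply Rle_trans. apply Rabs_triang. lra.
Qed.

Lemma derivable_pt_lim_little_o (phi : R -> R) y l : derivable_pt_lim phi y l ->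
  forall e, 0 < e -> exists d, 0 < d /\
    forall k, Rabs k < d -> Rabs (phi (y + k) - phi y - l * k) <= e * Rabs k.
Proof.
  intros H e He. destruct (H e He) as [d Hd]. exists d. split. apply cond_pos.
  intros k Hk. destruct (Req_dec k 0) as [E|E].
  - subst. rewrite Rplus_0_r. replace (phi y - phi y - l * 0) with 0 by ring. rewrite Rabs_R0; lra.
  - specialize (Hd k E Hk).
    replace (phi (y + k) - phi y - l * k) with (((phi (y + k) - phi y) / k - l) * k) by (field; auto).
    rewrite Rabs_mult. apply Rmult_le_compat_r. apply Rabs_pos. lra.
Qed.

Lemma derivable_pt_lim_cont (phi : R -> R) y l : derivable_pt_lim phi y l ->
  forall e, 0 < e -> exists d, 0 < d /\ forall w, Rabs (w - y) < d -> Rabs (phi w - phi y) < e.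
Proof.
  intros H e He. destruct (derivable_pt_lim_little_o phi y l H 1 Rlt_0_1) as [d [Hd K]].
  assert (Hl : 0 <= Rabs l) by apply Rabs_pos.
  assert (Hm1 := Rmin_l d (e / (Rabs l + 2))). assert (Hm2 := Rmin_r d (e / (Rabs l + 2))).
  exists (Rmin d (e / (Rabs l + 2))). split.
  { apply Rmin_pos; auto. apply Rdiv_lt_0_compat; lra. }
  intros w Hw. specialize (K (w - y) ltac:(lra)). replace (y + (w - y)) with w in K by ring.
  assert (Rabs (phi w - phi y) <= (Rabs l + 1) * Rabs (w - y)).
  { replace (phi w - phi y) with ((phi w - phi y - l * (w - y)) + l * (w - y)) by ring.
    eapply Rle_trans. apply Rabs_triang. rewrite Rabs_mult. lra. }
  assert ((Rabs l + 2) * Rabs (w - y) < e).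
  { assert (Rabs (w - y) < e / (Rabs l + 2)) by lra.
    apply (Rmult_lt_compat_l (Rabs l + 2)) in H1; [|lra]. field_simplify in H1; lra. }
  assert (0 <= Rabs (w - y)) by apply Rabs_pos. nra.
Qed.

Lemma has_grad_comp n (g : Vec n -> R) x G (phi : R -> R) l :
  has_grad g x G -> derivable_pt_lim phi (g x) l ->
  has_grad (fun y => phi (g y)) x (vscale l G).
Proof.
  intros Hg Hp eps Heps.
  destruct (has_grad_local_lipschitz n g x G Hg) as [d1 [Hd1 K1]].
  set (NG := norm2 G + 1). assert (HNG : 0 < NG) by (unfold NG; assert (H := norm2_nonneg n G); lra).
  destruct (derivable_pt_lim_little_o phi (g x) l Hp (eps / (2 * NG))
    ltac:(apply Rdiv_lt_0_compat; lra)) as [d2 [Hd2 K2]].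
  assert (Hl : 0 <= Rabs l) by apply Rabs_pos.
  destruct (Hg (eps / (2 * (Rabs l + 1))) ltac:(apply Rdiv_lt_0_compat; lra)) as [d3 [Hd3 K3]].
  exists (Rmin d1 (Rmin (d2 / NG) d3)). split.
  { repeat apply Rmin_pos; auto. apply Rdiv_lt_0_compat; auto. }
  intros h Hh.
  assert (Hm1 := Rmin_l d1 (Rmin (d2 / NG) d3)). assert (Hm2 := Rmin_r d1 (Rmin (d2 / NG) d3)).
  assert (Hm3 := Rmin_l (d2 / NG) d3). assert (Hm4 := Rmin_r (d2 / NG) d3).
  assert (Hn := norm2_nonneg n h).
  specialize (K1 h ltac:(lra)). specialize (K3 h ltac:(lra)).
  set (k := g (vadd x h) - g x) in *.
  assert (Hk : Rabs k < d2).
  { assert (NG * norm2 h < d2).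
    { assert (norm2 h < d2 / NG) by lra.
      apply (Rmult_lt_compat_l NG) in H; auto. field_simplify in H; lra. }
    unfold NG in *; lra. }
  specialize (K2 k Hk). replace (g x + k) with (g (vadd x h)) in K2 by (unfold k; ring).
  rewrite dot_scal_l.
  replace (phi (g (vadd x h)) - phi (g x) - l * dot G h) with
    ((phi (g (vadd x h)) - phi (g x) - l * k) + l * (k - dot G h)) by ring.
  eapply Rle_trans. apply Rabs_triang. rewrite Rabs_mult.
  assert (A : eps / (2 * NG) * Rabs k <= eps / 2 * norm2 h).
  { apply Rle_trans with (eps / (2 * NG) * (NG * norm2 h)).
    - apply Rmult_le_compat_l. left; apply Rdiv_lt_0_compat; lra. unfold NG in *; lra.
    - right; field; lra. }
  assert (B : Rabs l * Rabs (k - dot G h) <= eps / 2 * norm2 h).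
  { apply Rle_trans with (Rabs l * (eps / (2 * (Rabs l + 1)) * norm2 h)).
    { apply Rmult_le_compat_l; auto. }
    apply Rle_trans with ((Rabs l / (Rabs l + 1)) * (eps / 2 * norm2 h)).
    { right; field; lra. }
    rewrite <- (Rmult_1_l (eps / 2 * norm2 h)) at 2.
    apply Rmult_le_compat_r. nra.
    apply Rmult_le_reg_r with (Rabs l + 1). lra. field_simplify; lra. }
  lra.
Qed.

Lemma has_grad_line_deriv n (g : Vec n -> R) x v a G :
  has_grad g (vadd x (vscale a v)) G ->
  derivable_pt_lim (fun b => g (vadd x (vscale b v))) a (dot G v).
Proof.
  intros H eps Heps.
  set (N := norm2 v + 1). assert (Hv := norm2_nonneg n v). assert (HN : 0 < N) by (unfold N; lra).
  destruct (H (eps / (2 * N)) ltac:(apply Rdiv_lt_0_compat; lra)) as [d [Hd K]].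
  assert (Hd' : 0 < d / N) by (apply Rdiv_lt_0_compat; lra).
  exists (mkposreal _ Hd'). intros h Hh0 Hh. simpl in Hh.
  assert (Nh : norm2 (vscale h v) = Rabs h * norm2 v) by apply norm2_scal.
  assert (Hlt : norm2 (vscale h v) < d).
  { rewrite Nh. apply Rle_lt_trans with (Rabs h * N).
    - unfold N; assert (0 <= Rabs h) by apply Rabs_pos; nra.
    - apply (Rmult_lt_compat_r N) in Hh; auto. field_simplify in Hh; lra. }
  specialize (K _ Hlt).
  replace (vadd (vadd x (vscale a v)) (vscale h v)) with (vadd x (vscale (a + h) v)) in K
    by (apply functional_extensionality; intros i; unfold vadd, vscale; ring).
  rewrite dot_scal_r in K.
  set (gh := g (vadd x (vscale (a + h) v))) in *. set (ga := g (vadd x (vscale a v))) in *.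
  replace ((gh - ga) / h - dot G v) with ((gh - ga - h * dot G v) / h) by (field; auto).
  unfold Rdiv at 1. rewrite Rabs_mult, Rabs_inv.
  assert (0 < Rabs h) by (apply Rabs_pos_lt; auto).
  apply Rle_lt_trans with (eps / (2 * N) * (Rabs h * norm2 v) * / Rabs h).
  { apply Rmult_le_compat_r. left; apply Rinv_0_lt_compat; auto. rewrite <- Nh; auto. }
  replace (eps / (2 * N) * (Rabs h * norm2 v) * / Rabs h) with (eps * (norm2 v / (2 * N)))
    by (field; lra).
  assert (norm2 v / (2 * N) < 1).
  { apply Rmult_lt_reg_r with (2 * N). lra. field_simplify; unfold N; lra. }
  nra.
Qed.

(** * One-sided derivatives on [0, oo) *)

Lemma has_deriv_nonneg_little_o g t l : has_deriv_nonneg g t l ->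
  forall e, 0 < e -> exists d, 0 < d /\
    forall h, Rabs h < d -> 0 <= t + h -> Rabs (g (t + h) - g t - l * h) <= e * Rabs h.
Proof.
  intros H e He. destruct (H e He) as [d [Hd K]]. exists d; split; auto.
  intros h Hh Ht. destruct (Req_dec h 0) as [E|E].
  - subst. rewrite Rplus_0_r. replace (g t - g t - l * 0) with 0 by ring. rewrite Rabs_R0; lra.
  - specialize (K h E Hh Ht).
    replace (g (t + h) - g t - l * h) with (((g (t + h) - g t) / h - l) * h) by (field; auto).
    rewrite Rabs_mult. apply Rmult_le_compat_r. apply Rabs_pos. lra.
Qed.

Lemma has_deriv_nonneg_cont g t l : has_deriv_nonneg g t l ->
  forall e, 0 < e -> exists d, 0 < d /\
    forall u, 0 <= u -> Rabs (u - t) < d -> Rabs (g u - g t) < e.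
Proof.
  intros H e He. destruct (has_deriv_nonneg_little_o g t l H 1 Rlt_0_1) as [d [Hd K]].
  assert (Hl : 0 <= Rabs l) by apply Rabs_pos.
  assert (Hm1 := Rmin_l d (e / (Rabs l + 2))). assert (Hm2 := Rmin_r d (e / (Rabs l + 2))).
  exists (Rmin d (e / (Rabs l + 2))). split.
  { apply Rmin_pos; auto. apply Rdiv_lt_0_compat; lra. }
  intros w Hw0 Hw. specialize (K (w - t) ltac:(lra) ltac:(lra)).
  replace (t + (w - t)) with w in K by ring.
  assert (Rabs (g w - g t) <= (Rabs l + 1) * Rabs (w - t)).
  { replace (g w - g t) with ((g w - g t - l * (w - t)) + l * (w - t)) by ring.
    eapply Rle_trans. apply Rabs_triang. rewrite Rabs_mult. lra. }
  assert ((Rabs l + 2) * Rabs (w - t) < e).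
  { assert (Rabs (w - t) < e / (Rabs l + 2)) by lra.
    apply (Rmult_lt_compat_l (Rabs l + 2)) in H1; [|lra]. field_simplify in H1; lra. }
  assert (0 <= Rabs (w - t)) by apply Rabs_pos. nra.
Qed.

Lemma has_deriv_nonneg_eq_near g1 g2 t l : 0 <= t ->
  (exists r, 0 < r /\ forall u, 0 <= u -> Rabs (u - t) < r -> g1 u = g2 u) ->
  has_deriv_nonneg g1 t l -> has_deriv_nonneg g2 t l.
Proof.
  intros Ht [r [Hr E]] H e He. destruct (H e He) as [d [Hd K]].
  assert (Hm1 := Rmin_l d r). assert (Hm2 := Rmin_r d r).
  exists (Rmin d r). split. apply Rmin_pos; auto. intros h H1 H2 H3.
  rewrite <- !E; auto.
  - apply K; auto; lra.
  - rewrite Rminus_diag, Rabs_R0; auto.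
  - replace (t + h - t) with h by ring. lra.
Qed.

Lemma has_deriv_nonneg_of_derivable g t l : derivable_pt_lim g t l -> has_deriv_nonneg g t l.
Proof. intros H e He. destruct (H e He) as [d K]. exists d. split. apply cond_pos. auto. Qed.

Lemma derivable_of_has_deriv_nonneg g t l : 0 < t -> has_deriv_nonneg g t l -> derivable_pt_lim g t l.
Proof.
  intros Ht H e He. destruct (H e He) as [d [Hd K]].
  assert (Hp : 0 < Rmin d t) by (apply Rmin_pos; auto).
  exists (mkposreal _ Hp). simpl. intros h H1 H2.
  assert (Hm1 := Rmin_l d t). assert (Hm2 := Rmin_r d t). apply Rabs_lt_between in H2.
  apply K; auto. apply Rabs_lt_between; lra. lra.
Qed.

Lemma has_deriv_nonneg_plus g1 g2 t l1 l2 :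
  has_deriv_nonneg g1 t l1 -> has_deriv_nonneg g2 t l2 ->
  has_deriv_nonneg (fun u => g1 u + g2 u) t (l1 + l2).
Proof.
  intros H1 H2 e He.
  destruct (H1 (e/2) ltac:(lra)) as [d1 [Hd1 K1]]. destruct (H2 (e/2) ltac:(lra)) as [d2 [Hd2 K2]].
  assert (Hm1 := Rmin_l d1 d2). assert (Hm2 := Rmin_r d1 d2).
  exists (Rmin d1 d2). split. apply Rmin_pos; auto. intros h A B C.
  specialize (K1 h A ltac:(lra) C). specialize (K2 h A ltac:(lra) C).
  replace ((g1 (t + h) + g2 (t + h) - (g1 t + g2 t)) / h - (l1 + l2)) with
    (((g1 (t + h) - g1 t) / h - l1) + ((g2 (t + h) - g2 t) / h - l2)) by (field; auto).
  eapply Rle_lt_trans. apply Rabs_triang. lra.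
Qed.

Lemma has_deriv_nonneg_const a t : has_deriv_nonneg (fun _ => a) t 0.
Proof.
  intros e He. exists 1. split. lra. intros h A _ _.
  replace ((a - a) / h - 0) with 0 by (field; auto). rewrite Rabs_R0; auto.
Qed.

Lemma has_deriv_nonneg_mult g1 g2 t l1 l2 :
  has_deriv_nonneg g1 t l1 -> has_deriv_nonneg g2 t l2 ->
  has_deriv_nonneg (fun u => g1 u * g2 u) t (l1 * g2 t + g1 t * l2).
Proof.
  intros H1 H2 e He.
  set (A1 := Rabs (g1 t) + 1). set (A2 := Rabs (g2 t) + 1). set (L2 := Rabs l2 + 1).
  assert (P1 : 0 < A1) by (unfold A1; assert (H := Rabs_pos (g1 t)); lra).
  assert (P2 : 0 < A2) by (unfold A2; assert (H := Rabs_pos (g2 t)); lra).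
  assert (P3 : 0 < L2) by (unfold L2; assert (H := Rabs_pos l2); lra).
  destruct (H2 (e / (3 * A1)) ltac:(apply Rdiv_lt_0_compat; lra)) as [d1 [Hd1 K1]].
  destruct (H1 (e / (3 * A2)) ltac:(apply Rdiv_lt_0_compat; lra)) as [d2 [Hd2 K2]].
  assert (Q1 := Rmin_l 1 (e / (3 * L2))). assert (Q2 := Rmin_r 1 (e / (3 * L2))).
  destruct (has_deriv_nonneg_cont g1 t l1 H1 (Rmin 1 (e / (3 * L2))))
    as [d3 [Hd3 K3]]; [apply Rmin_pos; [lra|apply Rdiv_lt_0_compat; lra]|].
  assert (Hm1 := Rmin_l d1 (Rmin d2 d3)). assert (Hm2 := Rmin_r d1 (Rmin d2 d3)).
  assert (Hm3 := Rmin_l d2 d3). assert (Hm4 := Rmin_r d2 d3).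
  exists (Rmin d1 (Rmin d2 d3)). split. repeat apply Rmin_pos; auto.
  intros h A B C.
  specialize (K1 h A ltac:(lra) C). specialize (K2 h A ltac:(lra) C).
  specialize (K3 (t + h) C ltac:(replace (t + h - t) with h by ring; lra)).
  replace ((g1 (t + h) * g2 (t + h) - g1 t * g2 t) / h - (l1 * g2 t + g1 t * l2)) with
    (g1 (t + h) * ((g2 (t + h) - g2 t) / h - l2) + g2 t * ((g1 (t + h) - g1 t) / h - l1)
     + l2 * (g1 (t + h) - g1 t)) by (field; auto).
  assert (Hg1 : Rabs (g1 (t + h)) <= A1).
  { unfold A1. replace (g1 (t + h)) with (g1 t + (g1 (t + h) - g1 t)) by ring.
    eapply Rle_trans. apply Rabs_triang. lra. }
  assert (T1 : Rabs (g1 (t + h) * ((g2 (t + h) - g2 t) / h - l2)) <= e / 3).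
  { rewrite Rabs_mult. apply Rle_trans with (A1 * (e / (3 * A1))).
    apply Rmult_le_compat; try apply Rabs_pos; lra. right; field; lra. }
  assert (T2 : Rabs (g2 t * ((g1 (t + h) - g1 t) / h - l1)) <= e / 3).
  { rewrite Rabs_mult. apply Rle_trans with (A2 * (e / (3 * A2))).
    apply Rmult_le_compat; try apply Rabs_pos. unfold A2; lra. lra. right; field; lra. }
  assert (T3 : Rabs (l2 * (g1 (t + h) - g1 t)) < e / 3).
  { rewrite Rabs_mult. apply Rle_lt_trans with (L2 * Rabs (g1 (t + h) - g1 t)).
    apply Rmult_le_compat_r. apply Rabs_pos. unfold L2; lra.
    apply Rlt_le_trans with (L2 * (e / (3 * L2))). apply Rmult_lt_compat_l; lra. right; field; lra. }
  eapply Rle_lt_trans. apply Rabs_triang.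
  eapply Rle_lt_trans. apply Rplus_le_compat_r. apply Rabs_triang.
  lra.
Qed.

Lemma has_deriv_nonneg_sumF n (G : Fin.t n -> R -> R) l t :
  (forall i, has_deriv_nonneg (G i) t (l i)) ->
  has_deriv_nonneg (fun u => sumF n (fun i => G i u)) t (sumF n l).
Proof.
  revert G l; induction n; intros G l H; simpl. apply has_deriv_nonneg_const.
  apply (has_deriv_nonneg_plus (G Fin.F1) (fun u => sumF n (fun i => G (Fin.FS i) u))).
  - apply H.
  - apply (IHn (fun i => G (Fin.FS i)) (fun i => l (Fin.FS i))). intros; apply H.
Qed.

Lemma le_init_of_deriv_nonpos g d :
  (forall t, 0 <= t -> has_deriv_nonneg g t (d t) /\ d t <= 0) ->
  forall t, 0 <= t -> g t <= g 0.
Proof.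
  intros H t Ht. destruct Ht as [Ht|Ht]; [|subst; lra].
  apply Rnot_lt_le; intros Hlt.
  destruct (H 0 ltac:(lra)) as [H0 _].
  (* the mean value theorem only applies on (a, t) with a > 0, and g is
     continuous at 0 from the right *)
  destruct (has_deriv_nonneg_cont g 0 (d 0) H0 (g t - g 0) ltac:(lra)) as [d0 [Hd0 K]].
  set (a := Rmin (d0 / 2) (t / 2)).
  assert (Ha : 0 < a) by (unfold a; apply Rmin_pos; lra).
  assert (Ha1 : a <= d0 / 2) by apply Rmin_l. assert (Ha2 : a <= t / 2) by apply Rmin_r.
  specialize (K a ltac:(lra) ltac:(rewrite Rminus_0_r, Rabs_pos_eq; lra)).
  destruct (MVT_cor2 g d a t ltac:(lra)) as [c [Ec Hc]].
  { intros c Hc. apply derivable_of_has_deriv_nonneg. lra. apply H; lra. }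
  assert (d c <= 0) by (apply H; lra).
  apply Rabs_lt_between in K. nra.
Qed.

Lemma has_deriv_nonneg_increment n (z : R -> Vec n) (zd : Vec n) t :
  (forall i, has_deriv_nonneg (fun u => z u i) t (zd i)) ->
  forall eta, 0 < eta <= 1 -> exists d, 0 < d /\ forall h, h <> 0 -> Rabs h < d -> 0 <= t + h ->
    norm2 (vsub (z (t + h)) (z t)) <= Rabs h * (norm2 zd + 1) /\
    forall D : Vec n, Rabs (dot D (vsub (z (t + h)) (z t)) / h - dot D zd) <= norm2 D * eta.
Proof.
  intros Hz eta Heta.
  set (eta' := eta / (INR n + 1)).
  assert (Heta' : 0 < eta') by (unfold eta'; assert (H := pos_INR n); apply Rdiv_lt_0_compat; lra).
  destruct (exists_delta_fin n (fun i d => forall h, h <> 0 -> Rabs h < d -> 0 <= t + h ->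
      Rabs ((z (t + h) i - z t i) / h - zd i) < eta')) as [d [Hd K]].
  { intros i d d' Hd' K h H1 H2 H3. apply K; auto; lra. }
  { intros i. apply (Hz i eta' Heta'). }
  exists d. split; auto. intros h H1 H2 H3.
  set (w := fun i => (z (t + h) i - z t i) / h - zd i).
  assert (Hw : norm2 w <= eta).
  { left. apply Rle_lt_trans with (INR n * eta').
    - apply norm2_le_of_components. intros i. apply K; auto.
    - apply INR_mult_frac; lra. }
  assert (Edz : vsub (z (t + h)) (z t) = vscale h (vadd zd w)).
  { apply functional_extensionality; intros i. unfold vsub, vscale, vadd, w. field; auto. }
  rewrite Edz. split.
  - rewrite norm2_scal. apply Rmult_le_compat_l. apply Rabs_pos.
    eapply Rle_trans. apply norm2_triang. lra.
  - intros D. rewrite dot_scal_r, dot_plus_r.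
    replace (h * (dot D zd + dot D w) / h - dot D zd) with (dot D w) by (field; auto).
    eapply Rle_trans. apply Rabs_dot_le. apply Rmult_le_compat_l; auto. apply norm2_nonneg.
Qed.

(** * Functions differentiable in space, jointly continuous in space-time *)

Section JointC1.
Variable n : nat.
Variable U : Vec n -> R -> Prop.

Definition cont_on (G : Vec n -> R -> R) : Prop :=
  forall x t, U x t -> forall e, 0 < e -> exists d, 0 < d /\
    forall y u, U y u -> norm2 (vsub y x) < d -> Rabs (u - t) < d -> Rabs (G y u - G x t) < e.

Definition C1x_on (F : Vec n -> R -> R) (DF : Vec n -> R -> Vec n) : Prop :=
  (forall x t, U x t -> has_grad (fun y => F y t) x (DF x t)) /\ cont_on F /\
  (forall j, cont_on (fun x t => DF x t j)).

Lemma cont_on_const a : cont_on (fun _ _ => a).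
Proof.
  intros x t Hx e He. exists 1. split. lra. intros.
  rewrite Rminus_diag, Rabs_R0; auto.
Qed.

Lemma cont_on_plus F G : cont_on F -> cont_on G -> cont_on (fun x t => F x t + G x t).
Proof.
  intros HF HG x t Hx e He.
  destruct (HF x t Hx (e/2) ltac:(lra)) as [d1 [Hd1 K1]].
  destruct (HG x t Hx (e/2) ltac:(lra)) as [d2 [Hd2 K2]].
  assert (Hm1 := Rmin_l d1 d2). assert (Hm2 := Rmin_r d1 d2).
  exists (Rmin d1 d2). split. apply Rmin_pos; auto. intros y u Hy H1 H2.
  specialize (K1 y u Hy ltac:(lra) ltac:(lra)). specialize (K2 y u Hy ltac:(lra) ltac:(lra)).
  replace (F y u + G y u - (F x t + G x t)) with ((F y u - F x t) + (G y u - G x t)) by ring.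
  eapply Rle_lt_trans. apply Rabs_triang. lra.
Qed.

Lemma Rmult_near a0 b0 e : 0 < e -> exists r, 0 < r /\
  forall a b, Rabs (a - a0) < r -> Rabs (b - b0) < r -> Rabs (a * b - a0 * b0) < e.
Proof.
  intros He. set (M := Rabs a0 + Rabs b0 + 1).
  assert (Ha0 := Rabs_pos a0). assert (Hb0 := Rabs_pos b0).
  assert (HM : 0 < M) by (unfold M; lra).
  set (r := Rmin 1 (e / (2 * M))).
  assert (Hm1 : r <= 1) by apply Rmin_l. assert (Hm2 : r <= e / (2 * M)) by apply Rmin_r.
  assert (Hr0 : 0 < r) by (apply Rmin_pos; [lra| apply Rdiv_lt_0_compat; lra]).
  exists r. split; auto. intros a b Ha Hb.
  replace (a * b - a0 * b0) with ((a - a0) * (b - b0) + a0 * (b - b0) + b0 * (a - a0)) by ring.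
  assert (A1 : Rabs ((a - a0) * (b - b0)) <= r * r).
  { rewrite Rabs_mult. apply Rmult_le_compat; try apply Rabs_pos; lra. }
  assert (A2 : Rabs (a0 * (b - b0)) <= Rabs a0 * r).
  { rewrite Rabs_mult. apply Rmult_le_compat_l; try apply Rabs_pos; lra. }
  assert (A3 : Rabs (b0 * (a - a0)) <= Rabs b0 * r).
  { rewrite Rabs_mult. apply Rmult_le_compat_l; try apply Rabs_pos; lra. }
  assert (r * r <= r * 1) by (apply Rmult_le_compat_l; lra).
  assert (M * r <= e / 2).
  { apply Rle_trans with (M * (e / (2 * M))). apply Rmult_le_compat_l; lra. right; field; lra. }
  eapply Rle_lt_trans. apply Rabs_triang.
  eapply Rle_lt_trans. apply Rplus_le_compat_r. apply Rabs_triang.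
  unfold M in *. lra.
Qed.

Lemma cont_on_mult F G : cont_on F -> cont_on G -> cont_on (fun x t => F x t * G x t).
Proof.
  intros HF HG x t Hx e He. destruct (Rmult_near (F x t) (G x t) e He) as [r [Hr K]].
  destruct (HF x t Hx r Hr) as [d1 [Hd1 K1]]. destruct (HG x t Hx r Hr) as [d2 [Hd2 K2]].
  assert (Hm1 := Rmin_l d1 d2). assert (Hm2 := Rmin_r d1 d2).
  exists (Rmin d1 d2). split. apply Rmin_pos; auto. intros y u Hy H1 H2.
  apply K. apply K1; auto; lra. apply K2; auto; lra.
Qed.

Lemma cont_on_comp (phi : R -> R) F : cont_on F ->
  (forall x t, U x t -> forall e, 0 < e -> exists d, 0 < d /\
     forall w, Rabs (w - F x t) < d -> Rabs (phi w - phi (F x t)) < e) ->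
  cont_on (fun x t => phi (F x t)).
Proof.
  intros HF Hp x t Hx e He. destruct (Hp x t Hx e He) as [r [Hr K]].
  destruct (HF x t Hx r Hr) as [d [Hd K1]]. exists d; split; auto.
Qed.

Lemma C1x_on_ext F DF G DG : (forall x t, F x t = G x t) ->
  (forall x t j, U x t -> DF x t j = DG x t j) -> C1x_on F DF -> C1x_on G DG.
Proof.
  intros E1 E2 [H1 [H2 H3]]. split; [|split].
  - intros x t Hx. replace (DG x t) with (DF x t) by (apply functional_extensionality; auto).
    replace (fun y => G y t) with (fun y => F y t) by (apply functional_extensionality; auto).
    auto.
  - intros x t Hx e He. destruct (H2 x t Hx e He) as [d [Hd K]]. exists d; split; auto.
    intros; rewrite <- !E1; auto.
  - intros j x t Hx e He. destruct (H3 j x t Hx e He) as [d [Hd K]]. exists d; split; auto.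
    intros y u Hy A B. rewrite <- !E2; auto.
Qed.

Lemma C1x_on_time (h : R -> R) : cont_on (fun _ t => h t) -> C1x_on (fun _ t => h t) (fun _ _ _ => 0).
Proof.
  intros Hc. split; [|split]; auto.
  - intros x t _. apply has_grad_const.
  - intros j. apply cont_on_const.
Qed.

Lemma C1x_on_plus F DF G DG : C1x_on F DF -> C1x_on G DG ->
  C1x_on (fun x t => F x t + G x t) (fun x t => vadd (DF x t) (DG x t)).
Proof.
  intros [H1 [H2 H3]] [K1 [K2 K3]]. split; [|split].
  - intros x t Hx. apply has_grad_plus; auto.
  - apply cont_on_plus; auto.
  - intros j. apply (cont_on_plus (fun x t => DF x t j) (fun x t => DG x t j)); auto.
Qed.

Lemma C1x_on_comp F DF (phi phi' phi'' : R -> R) : C1x_on F DF ->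
  (forall x t, U x t -> derivable_pt_lim phi (F x t) (phi' (F x t)) /\
                        derivable_pt_lim phi' (F x t) (phi'' (F x t))) ->
  C1x_on (fun x t => phi (F x t)) (fun x t => vscale (phi' (F x t)) (DF x t)).
Proof.
  intros [H1 [H2 H3]] Hp. split; [|split].
  - intros x t Hx. apply has_grad_comp; auto. apply Hp; auto.
  - apply cont_on_comp; auto. intros x t Hx.
    apply derivable_pt_lim_cont with (phi' (F x t)). apply Hp; auto.
  - intros j. apply (cont_on_mult (fun x t => phi' (F x t)) (fun x t => DF x t j)); auto.
    apply cont_on_comp; auto. intros x t Hx.
    apply derivable_pt_lim_cont with (phi'' (F x t)). apply Hp; auto.
Qed.

Lemma C1x_on_scal a F DF : C1x_on F DF -> C1x_on (fun x t => a * F x t) (fun x t => vscale a (DF x t)).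
Proof.
  intros H. apply (C1x_on_comp F DF (fun y => a * y) (fun _ => a) (fun _ => 0)); auto.
  intros; split; apply is_derive_Reals; auto_derive; auto; ring.
Qed.

Lemma C1x_on_sq F DF : C1x_on F DF ->
  C1x_on (fun x t => F x t * F x t) (fun x t => vscale (2 * F x t) (DF x t)).
Proof.
  intros H. apply (C1x_on_comp F DF (fun y => y * y) (fun y => 2 * y) (fun _ => 2)); auto.
  intros; split; apply is_derive_Reals; auto_derive; auto; ring.
Qed.

(* Products via polarisation: F G = ((F + G)^2 - (F - G)^2) / 4. *)
Lemma C1x_on_mult F DF G DG : C1x_on F DF -> C1x_on G DG ->
  C1x_on (fun x t => F x t * G x t) (fun x t j => F x t * DG x t j + G x t * DF x t j).
Proof.
  intros HF HG.
  assert (Hs := C1x_on_plus _ _ _ _ HF HG).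
  assert (Hd := C1x_on_plus _ _ _ _ HF (C1x_on_scal (-1) _ _ HG)).
  assert (H := C1x_on_scal (/4) _ _
    (C1x_on_plus _ _ _ _ (C1x_on_sq _ _ Hs) (C1x_on_scal (-1) _ _ (C1x_on_sq _ _ Hd)))).
  eapply C1x_on_ext; [| |apply H].
  - intros; simpl. field.
  - intros x t j _. unfold vscale, vadd. field.
Qed.

Lemma C1x_on_sumF p (F : Fin.t p -> Vec n -> R -> R) DF : (forall i, C1x_on (F i) (DF i)) ->
  C1x_on (fun x t => sumF p (fun i => F i x t)) (fun x t j => sumF p (fun i => DF i x t j)).
Proof.
  revert F DF; induction p; intros F DF H; simpl.
  - apply (C1x_on_time (fun _ => 0)). apply cont_on_const.
  - apply (C1x_on_plus _ _ _ _ (H Fin.F1)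
      (IHp (fun i => F (Fin.FS i)) (fun i => DF (Fin.FS i)) (fun i => H (Fin.FS i)))).
Qed.

Lemma C1x_on_of_C2x_C1t (HU0 : forall x t, U x t -> 0 <= t) F gF HF Ft :
  C2x_C1t F gF HF Ft ->
  C1x_on F gF /\ forall j, C1x_on (fun x t => gF x t j) (fun x t => HF x t j).
Proof.
  intros [A [B [_ [D [E [G _]]]]]].
  assert (CU : forall H, cont_xt H -> cont_on H).
  { intros H HH x t Hx e He. destruct (HH x t (HU0 x t Hx) e He) as [d [Hd Kd]].
    exists d; split; auto. intros y u Hy. apply Kd. apply (HU0 y u Hy). }
  split; [split; [|split]|intros j; split; [|split]].
  - intros x t Hx. apply A, (HU0 x t Hx).
  - apply CU, D.
  - intros j. apply CU, E.
  - intros x t Hx. exact (B x t (HU0 x t Hx) j).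
  - apply CU, E.
  - intros k. apply CU, G.
Qed.

End JointC1.

Section ChainRule.
Variable n : nat.
Variable U : Vec n -> R -> Prop.
Hypothesis U_open : forall x t, U x t -> exists d, 0 < d /\
  forall y u, 0 <= u -> norm2 (vsub y x) < d -> Rabs (u - t) < d -> U y u.
Variables (F : Vec n -> R -> R) (DF : Vec n -> R -> Vec n).
Hypothesis F_C1 : C1x_on n U F DF.

Lemma C1x_on_expansion x t : U x t -> forall kap, 0 < kap -> exists d, 0 < d /\
  forall y u, 0 <= u -> norm2 (vsub y x) < d -> Rabs (u - t) < d ->
    Rabs (F y u - F x u - dot (DF x t) (vsub y x)) <= kap * norm2 (vsub y x).
Proof.
  intros Hx kap Hkap. destruct F_C1 as [Jg [_ Jd]].
  set (kap' := kap / (INR n + 1)).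
  assert (Hkap' : 0 < kap') by (unfold kap'; assert (H := pos_INR n); apply Rdiv_lt_0_compat; lra).
  destruct (exists_delta_fin n (fun j d => forall y u, U y u -> norm2 (vsub y x) < d ->
      Rabs (u - t) < d -> Rabs (DF y u j - DF x t j) < kap')) as [dD [HdD KD]].
  { intros j d d' Hd' K y u H1 H2 H3. apply K; auto; lra. }
  { intros j. apply (Jd j x t Hx kap' Hkap'). }
  destruct (U_open x t Hx) as [dU [HdU KU]].
  assert (Hm1 := Rmin_l dD dU). assert (Hm2 := Rmin_r dD dU).
  exists (Rmin dD dU). split. apply Rmin_pos; auto.
  intros y u Hu Hy Hut. set (v := vsub y x) in *. assert (Hv := norm2_nonneg n v).
  assert (Hseg : forall a, 0 <= a <= 1 -> norm2 (vsub (vadd x (vscale a v)) x) <= norm2 v).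
  { intros a Ha. rewrite vsub_vadd, norm2_scal, Rabs_pos_eq by lra. nra. }
  assert (Useg : forall a, 0 <= a <= 1 -> U (vadd x (vscale a v)) u)
    by (intros a Ha; apply KU; auto; specialize (Hseg a Ha); lra).
  destruct (MVT_cor2 (fun a => F (vadd x (vscale a v)) u)
      (fun a => dot (DF (vadd x (vscale a v)) u) v) 0 1 Rlt_0_1) as [c [Ec Hc]].
  { intros c Hc. exact (has_grad_line_deriv n (fun y => F y u) x v c _ (Jg _ _ (Useg c Hc))). }
  replace (vadd x (vscale 1 v)) with y in Ec
    by (apply functional_extensionality; intros i; unfold v, vadd, vscale, vsub; ring).
  replace (vadd x (vscale 0 v)) with x in Ec
    by (apply functional_extensionality; intros i; unfold vadd, vscale; ring).
  set (xi := vadd x (vscale c v)) in Ec.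
  assert (Hxi : norm2 (vsub (DF xi u) (DF x t)) <= kap).
  { left. apply Rle_lt_trans with (INR n * kap').
    - apply norm2_le_of_components. intros j. apply KD.
      + apply Useg; lra.
      + specialize (Hseg c ltac:(lra)). fold xi in Hseg. lra.
      + lra.
    - apply INR_mult_frac; auto. }
  rewrite Ec, Rminus_0_r, Rmult_1_r, <- dot_sub_l.
  eapply Rle_trans. apply Rabs_dot_le. apply Rmult_le_compat_r; auto.
Qed.

Lemma C1x_on_expansion_curve (z : R -> Vec n) (zd : Vec n) t :
  U (z t) t -> (forall i, has_deriv_nonneg (fun u => z u i) t (zd i)) ->
  forall eps, 0 < eps -> exists d, 0 < d /\ forall h, h <> 0 -> Rabs h < d -> 0 <= t + h ->
    Rabs ((F (z (t + h)) (t + h) - F (z t) (t + h)) / h - dot (DF (z t) t) zd) <= eps.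
Proof.
  intros HU Hz eps Heps.
  set (x := z t) in *. set (D := DF x t). assert (HND := norm2_nonneg n D).
  set (Nz := norm2 zd + 1). assert (HNz : 1 <= Nz) by (unfold Nz; assert (H := norm2_nonneg n zd); lra).
  set (eta := Rmin 1 (eps / (2 * (norm2 D + 1)))).
  assert (Heta1 : eta <= 1) by apply Rmin_l.
  assert (Heta2 : eta <= eps / (2 * (norm2 D + 1))) by apply Rmin_r.
  assert (Heta : 0 < eta) by (apply Rmin_pos; [lra|apply Rdiv_lt_0_compat; lra]).
  assert (Hkap : 0 < eps / (2 * Nz)) by (apply Rdiv_lt_0_compat; lra).
  destruct (has_deriv_nonneg_increment n z zd t Hz eta (conj Heta Heta1)) as [dz [Hdz Kz]].
  destruct (C1x_on_expansion x t HU _ Hkap) as [dM [HdM KM]].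
  assert (Ha := Rmin_l dz (dM / Nz)). assert (Hb := Rmin_r dz (dM / Nz)).
  exists (Rmin dz (dM / Nz)). split. { apply Rmin_pos; auto. apply Rdiv_lt_0_compat; lra. }
  intros h Hh0 Hh Hth. assert (Habs := Rabs_pos_lt h Hh0).
  destruct (Kz h Hh0 ltac:(lra) Hth) as [Ndz Hlin]. specialize (Hlin D).
  change (z t) with x in Ndz, Hlin. change (norm2 zd + 1) with Nz in Ndz.
  set (dz' := vsub (z (t + h)) x) in *.
  assert (HhNz : Rabs h * Nz < dM).
  { assert (Rabs h < dM / Nz) by lra. apply (Rmult_lt_compat_r Nz) in H; [|lra].
    field_simplify in H; lra. }
  assert (Hdz' : norm2 dz' < dM) by lra.
  specialize (KM (z (t + h)) (t + h) Hth Hdz' ltac:(replace (t + h - t) with h by ring; nra)).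
  set (E := F (z (t + h)) (t + h) - F x (t + h) - dot D dz').
  change (Rabs E <= eps / (2 * Nz) * norm2 dz') in KM.
  replace ((F (z (t + h)) (t + h) - F x (t + h)) / h - dot D zd)
    with (E / h + (dot D dz' / h - dot D zd)) by (unfold E; field; auto).
  assert (B1 : Rabs (E / h) <= eps / 2).
  { unfold Rdiv. rewrite Rabs_mult, Rabs_inv.
    apply Rmult_le_reg_r with (Rabs h); auto. field_simplify; try lra.
    assert (eps / (2 * Nz) * norm2 dz' <= eps / (2 * Nz) * (Rabs h * Nz))
      by (apply Rmult_le_compat_l; lra).
    replace (eps / (2 * Nz) * (Rabs h * Nz)) with (eps * Rabs h / 2) in H by (field; lra).
    lra. }
  assert (B2 : norm2 D * eta <= eps / 2).
  { apply Rle_trans with (norm2 D * (eps / (2 * (norm2 D + 1)))).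
    - apply Rmult_le_compat_l; lra.
    - apply Rmult_le_reg_r with (2 * (norm2 D + 1)). lra. field_simplify; nra. }
  eapply Rle_trans. apply Rabs_triang. lra.
Qed.

Lemma has_deriv_nonneg_chain (z : R -> Vec n) (zd : Vec n) t Ft :
  U (z t) t -> (forall i, has_deriv_nonneg (fun u => z u i) t (zd i)) ->
  has_deriv_nonneg (fun u => F (z t) u) t Ft ->
  has_deriv_nonneg (fun u => F (z u) u) t (dot (DF (z t) t) zd + Ft).
Proof.
  intros HU Hz HF eps Heps.
  destruct (C1x_on_expansion_curve z zd t HU Hz (eps / 3) ltac:(lra)) as [d1 [Hd1 K1]].
  destruct (HF (eps / 3) ltac:(lra)) as [d2 [Hd2 K2]].
  assert (Hm1 := Rmin_l d1 d2). assert (Hm2 := Rmin_r d1 d2).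
  exists (Rmin d1 d2). split. apply Rmin_pos; auto. intros h Hh0 Hh Hth.
  specialize (K1 h Hh0 ltac:(lra) Hth). specialize (K2 h Hh0 ltac:(lra) Hth).
  set (x := z t) in *.
  replace ((F (z (t + h)) (t + h) - F x t) / h - (dot (DF x t) zd + Ft))
    with (((F (z (t + h)) (t + h) - F x (t + h)) / h - dot (DF x t) zd)
          + ((F x (t + h) - F x t) / h - Ft)) by (field; auto).
  eapply Rle_lt_trans. apply Rabs_triang. lra.
Qed.

End ChainRule.

(** * Convexity *)

Lemma ln_le_sub_1 u : 0 < u -> ln u <= u - 1.
Proof. intros Hu. assert (H := exp_ineq1_le (ln u)). rewrite exp_ln in H; auto. lra. Qed.

Lemma ln_concave X Y a : 0 < X -> 0 < Y -> 0 <= a <= 1 ->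
  a * ln X + (1 - a) * ln Y <= ln (a * X + (1 - a) * Y).
Proof.
  intros HX HY Ha. set (M := a * X + (1 - a) * Y).
  assert (HM : 0 < M) by (unfold M; nra).
  assert (HiM : 0 < / M) by (apply Rinv_0_lt_compat; auto).
  assert (E1 : ln X - ln M = ln (X * / M)) by (rewrite ln_mult, ln_Rinv; auto; ring).
  assert (E2 : ln Y - ln M = ln (Y * / M)) by (rewrite ln_mult, ln_Rinv; auto; ring).
  assert (L1 := ln_le_sub_1 (X * / M) ltac:(apply Rmult_lt_0_compat; auto)).
  assert (L2 := ln_le_sub_1 (Y * / M) ltac:(apply Rmult_lt_0_compat; auto)).
  assert (S : a * (X * / M - 1) + (1 - a) * (Y * / M - 1) = 0) by (unfold M in *; field; lra).
  assert (a * (ln X - ln M) + (1 - a) * (ln Y - ln M) <= 0).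
  { rewrite E1, E2. apply Rle_trans with (a * (X * / M - 1) + (1 - a) * (Y * / M - 1)).
    apply Rplus_le_compat; apply Rmult_le_compat_l; lra. lra. }
  lra.
Qed.

Lemma derivable_pt_lim_sumF n (F : Fin.t n -> R -> R) l a :
  (forall i, derivable_pt_lim (F i) a (l i)) ->
  derivable_pt_lim (fun b => sumF n (fun i => F i b)) a (sumF n l).
Proof.
  revert F l; induction n; intros F l H; simpl.
  - apply (derivable_pt_lim_const 0).
  - apply (derivable_pt_lim_plus (F Fin.F1) (fun b => sumF n (fun i => F (Fin.FS i) b))).
    + apply H.
    + apply (IHn (fun i => F (Fin.FS i)) (fun i => l (Fin.FS i))). intros; apply H.
Qed.

Lemma strongly_convex_first_order n (g : Vec n -> R) (gg : Vec n -> Vec n) (H : Vec n -> Mat n) m x y :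
  (forall p, has_grad g p (gg p)) -> (forall p, has_hess gg p (H p)) ->
  (forall p, psd_lb (H p) m) ->
  g x + dot (gg x) (vsub y x) + m / 2 * dot (vsub y x) (vsub y x) <= g y.
Proof.
  intros Hg HH Hpsd. set (v := vsub y x). set (dd := dot v v).
  set (P := fun a => vadd x (vscale a v)).
  set (phi := fun a => g (P a)).
  set (psi := fun a => dot v (gg (P a))).
  set (psi' := fun a => dot v (matvec (H (P a)) v)).
  assert (Dphi : forall a, derivable_pt_lim phi a (psi a)).
  { intros a. unfold psi. rewrite dot_comm. apply has_grad_line_deriv, Hg. }
  assert (Dpsi : forall a, derivable_pt_lim psi a (psi' a)).
  { intros a. apply derivable_pt_lim_sumF. intros j.
    apply (derivable_pt_lim_scal (fun b => gg (P b) j)).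
    apply (has_grad_line_deriv n (fun q => gg q j)), HH. }
  assert (Hpsi' : forall a, m * dd <= psi' a) by (intros a; apply Hpsd).
  assert (Hdd : 0 <= dd) by apply dot_self_nonneg.
  assert (Hw : forall a, 0 <= a -> psi 0 + m * a * dd <= psi a).
  { intros a Ha. destruct Ha as [Ha|Ha]; [|subst; lra].
    destruct (MVT_cor2 (fun b => psi b - m * b * dd) (fun b => psi' b - m * dd) 0 a Ha)
      as [c [Ec _]].
    { intros c _. apply (derivable_pt_lim_minus psi (fun b => m * b * dd)). apply Dpsi.
      apply is_derive_Reals. auto_derive; auto; ring. }
    specialize (Hpsi' c). nra. }
  destruct (MVT_cor2 (fun a => phi a - a * psi 0 - m / 2 * (a * a) * dd)
     (fun a => psi a - psi 0 - m * a * dd) 0 1 Rlt_0_1) as [c [Ec Hc]].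
  { intros c _.
    apply (derivable_pt_lim_minus (fun a => phi a - a * psi 0) (fun a => m / 2 * (a * a) * dd)).
    - apply (derivable_pt_lim_minus phi (fun a => a * psi 0)). apply Dphi.
      apply is_derive_Reals. auto_derive; auto; ring.
    - apply is_derive_Reals. auto_derive; auto; field. }
  specialize (Hw c ltac:(lra)).
  assert (E1 : P 1 = y) by (apply functional_extensionality; intros i; unfold P, v, vadd, vscale, vsub; ring).
  assert (E0 : P 0 = x) by (apply functional_extensionality; intros i; unfold P, vadd, vscale; ring).
  unfold phi in Ec. rewrite E1, E0 in Ec. unfold psi in Ec, Hw. rewrite E0 in Ec, Hw.
  rewrite dot_comm in Ec, Hw. fold v dd. nra.
Qed.

Lemma convex_first_order n (B : Vec n -> R) x y G : has_grad B x G ->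
  (forall a, 0 < a <= 1 -> B (vadd x (vscale a (vsub y x))) <= (1 - a) * B x + a * B y) ->
  dot G (vsub y x) <= B y - B x.
Proof.
  intros HG Hc. set (v := vsub y x).
  assert (HD : derivable_pt_lim (fun b => B (vadd x (vscale b v))) 0 (dot G v)).
  { apply has_grad_line_deriv. replace (vadd x (vscale 0 v)) with x; auto.
    apply functional_extensionality; intros i; unfold vadd, vscale; ring. }
  apply Rnot_lt_le; intros Hlt. set (e := dot G v - (B y - B x)).
  assert (He : 0 < e) by (unfold e; lra).
  destruct (HD e He) as [d K]. assert (Hd := cond_pos d).
  set (a := Rmin (d / 2) (1 / 2)).
  assert (Ha : 0 < a) by (unfold a; apply Rmin_pos; lra).
  assert (Ha1 : a <= 1 / 2) by apply Rmin_r. assert (Ha2 : a <= d / 2) by apply Rmin_l.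
  specialize (K a ltac:(lra) ltac:(rewrite Rabs_pos_eq; lra)).
  rewrite Rplus_0_l in K.
  replace (vadd x (vscale 0 v)) with x in K
    by (apply functional_extensionality; intros i; unfold vadd, vscale; ring).
  specialize (Hc a ltac:(lra)). fold v in Hc.
  apply Rabs_lt_between in K.
  assert ((B (vadd x (vscale a v)) - B x) / a <= B y - B x).
  { apply Rmult_le_reg_r with a; auto. field_simplify; lra. }
  unfold e in K. lra.
Qed.

Lemma dist_le_of_strongly_convex n (g : Vec n -> R) x y G m : 0 < m ->
  g x + dot G (vsub y x) + m / 2 * dot (vsub y x) (vsub y x) <= g y -> g y <= g x ->
  norm2 (vsub x y) <= 2 / m * norm2 G.
Proof.
  intros Hm Hsc Hmin. rewrite norm2_sub_sym. set (v := vsub y x) in *.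
  assert (HCS := Rabs_dot_le n G v). apply Rabs_le_between in HCS.
  rewrite <- norm2_sq in Hsc.
  assert (Hnv := norm2_nonneg n v). assert (Hng := norm2_nonneg n G).
  apply Rmult_le_reg_l with (m / 2). lra.
  replace (m / 2 * (2 / m * norm2 G)) with (norm2 G) by (field; lra).
  destruct Hnv as [Hnv|Hnv].
  - apply Rmult_le_reg_r with (norm2 v); auto. nra.
  - rewrite <- Hnv. lra.
Qed.

Lemma norm2_exp_decay n (u : R -> Vec n) (P : Mat n) sigma : psd_lb P sigma ->
  (forall t, 0 <= t -> forall j, has_deriv_nonneg (fun v => u v j) t (- matvec P (u t) j)) ->
  forall t, 0 <= t -> norm2 (u t) <= exp (- sigma * t) * norm2 (u 0).
Proof.
  intros [_ HP] Hu.
  set (V := fun t => exp (2 * sigma * t) * dot (u t) (u t)).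
  assert (HV : forall t, 0 <= t -> V t <= V 0).
  { apply le_init_of_deriv_nonpos with (fun t => 2 * sigma * exp (2 * sigma * t) * dot (u t) (u t)
        + exp (2 * sigma * t) * sumF n (fun j => - matvec P (u t) j * u t j + u t j * - matvec P (u t) j)).
    intros t Ht. split.
    - apply (has_deriv_nonneg_mult (fun v => exp (2 * sigma * v)) (fun v => dot (u v) (u v))).
      + apply has_deriv_nonneg_of_derivable, is_derive_Reals. auto_derive; auto. ring.
      + apply (has_deriv_nonneg_sumF n (fun j v => u v j * u v j)). intros j.
        apply has_deriv_nonneg_mult; apply Hu; auto.
    - assert (E : sumF n (fun j => - matvec P (u t) j * u t j + u t j * - matvec P (u t) j)
                  = - 2 * dot (u t) (matvec P (u t))).
      { unfold dot. rewrite <- sumF_scal. apply sumF_ext. intros j. ring. }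
      rewrite E. specialize (HP (u t)). assert (Hex := exp_pos (2 * sigma * t)). nra. }
  intros t Ht. specialize (HV t Ht). unfold V in HV. rewrite Rmult_0_r, exp_0, Rmult_1_l in HV.
  assert (Hee : exp (2 * sigma * t) * (exp (- sigma * t) * exp (- sigma * t)) = 1).
  { rewrite <- !exp_plus. replace (2 * sigma * t + (- sigma * t + - sigma * t)) with 0 by ring.
    apply exp_0. }
  assert (He := exp_pos (- sigma * t)). assert (He2 := exp_pos (2 * sigma * t)).
  assert (dot (u t) (u t) <= exp (- sigma * t) * exp (- sigma * t) * dot (u 0) (u 0)).
  { apply Rmult_le_reg_l with (exp (2 * sigma * t)); auto.
    rewrite <- Rmult_assoc, Hee. lra. }
  unfold norm2. rewrite <- (sqrt_square (exp (- sigma * t))) by lra.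
  rewrite <- sqrt_mult_alt by nra.
  apply sqrt_le_1_alt. auto.
Qed.

(** * The perturbed log-barrier *)

Section Barrier.
Variables (n p : nat)
  (f0 : Vec n -> R -> R) (gf0 : Vec n -> R -> Vec n) (Hf0 : Vec n -> R -> Mat n)
  (f0t : Vec n -> R -> R)
  (f : Fin.t p -> Vec n -> R -> R) (gf : Fin.t p -> Vec n -> R -> Vec n)
  (Hf : Fin.t p -> Vec n -> R -> Mat n) (ft : Fin.t p -> Vec n -> R -> R)
  (c s c' s' : R -> R).
Hypothesis f0_smooth : C2x_C1t f0 gf0 Hf0 f0t.
Hypothesis f_smooth : forall i, C2x_C1t (f i) (gf i) (Hf i) (ft i).
Hypothesis c_pos : forall t, 0 <= t -> 0 < c t.
Hypothesis c_deriv : forall t, 0 <= t -> has_deriv_nonneg c t (c' t).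
Hypothesis s_deriv : forall t, 0 <= t -> has_deriv_nonneg s t (s' t).

Definition barrier_dom (x : Vec n) (t : R) : Prop := 0 <= t /\ Dom_t f s t x.

Lemma barrier_dom_time x t : barrier_dom x t -> 0 <= t.
Proof. intros [H _]; auto. Qed.

Lemma barrier_dom_open x t : barrier_dom x t -> exists d, 0 < d /\
  forall y u, 0 <= u -> norm2 (vsub y x) < d -> Rabs (u - t) < d -> barrier_dom y u.
Proof.
  intros [Ht Hd].
  destruct (exists_delta_fin p (fun i d => forall y u, 0 <= u -> norm2 (vsub y x) < d ->
      Rabs (u - t) < d -> f i y u < s u)) as [d [Hdp K]].
  { intros i d d' Hd' K y u A B C. apply K; auto; lra. }
  { intros i. specialize (Hd i). set (g := s t - f i x t). assert (Hg : 0 < g) by (unfold g; lra).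
    destruct (f_smooth i) as [_ [_ [_ [Cf _]]]].
    destruct (Cf x t Ht (g/2) ltac:(lra)) as [d1 [Hd1 K1]].
    destruct (has_deriv_nonneg_cont s t (s' t) (s_deriv t Ht) (g/2) ltac:(lra)) as [d2 [Hd2 K2]].
    assert (Hm1 := Rmin_l d1 d2). assert (Hm2 := Rmin_r d1 d2).
    exists (Rmin d1 d2). split. apply Rmin_pos; auto. intros y u A B C.
    specialize (K1 y u A ltac:(lra) ltac:(lra)). specialize (K2 u A ltac:(lra)).
    apply Rabs_lt_between in K1. apply Rabs_lt_between in K2. unfold g in *. lra. }
  exists d. split; auto. intros y u A B C. split; auto. intros i. apply K; auto.
Qed.

Lemma time_fun_cont_on (h h' : R -> R) : (forall t, 0 <= t -> has_deriv_nonneg h t (h' t)) ->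
  cont_on n barrier_dom (fun _ t => h t).
Proof.
  intros Hh x t Hx e He.
  destruct (has_deriv_nonneg_cont h t (h' t) (Hh t (barrier_dom_time _ _ Hx)) e He) as [d [Hd K]].
  exists d; split; auto. intros y u Hy _ Hu. apply K; auto. apply (barrier_dom_time _ _ Hy).
Qed.

Definition grad_barrier (x : Vec n) (t : R) : Vec n :=
  fun j => gf0 x t j + / c t * sumF p (fun i => / (s t - f i x t) * gf i x t j).

Let f0_C1 := C1x_on_of_C2x_C1t n barrier_dom barrier_dom_time _ _ _ _ f0_smooth.
Let f_C1 i := C1x_on_of_C2x_C1t n barrier_dom barrier_dom_time _ _ _ _ (f_smooth i).

Lemma slack_C1 i : C1x_on n barrier_dom (fun x t => s t + -1 * f i x t)
  (fun x t => vadd (fun _ => 0) (vscale (-1) (gf i x t))).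
Proof.
  apply (C1x_on_plus n barrier_dom (fun _ t => s t) (fun _ _ _ => 0)).
  - apply C1x_on_time, (time_fun_cont_on s s'), s_deriv.
  - apply C1x_on_scal, f_C1.
Qed.

Lemma slack_pos x t i : barrier_dom x t -> 0 < s t + -1 * f i x t.
Proof. intros [_ H]. specialize (H i). lra. Qed.

Lemma inv_c_C1 : C1x_on n barrier_dom (fun _ t => / c t) (fun x t => vscale (- / (c t * c t)) (fun _ => 0)).
Proof.
  apply (C1x_on_comp n barrier_dom (fun _ t => c t) (fun _ _ _ => 0) Rinv
           (fun y => - / (y * y)) (fun y => 2 / (y * y * y))).
  - apply C1x_on_time, (time_fun_cont_on c c'), c_deriv.
  - intros x t Hx. assert (Hct := c_pos t (barrier_dom_time _ _ Hx)).
    split; apply is_derive_Reals; auto_derive; try nra; field; lra.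
Qed.

Lemma barrier_C1 : C1x_on n barrier_dom (Phi_t f0 f c s) grad_barrier.
Proof.
  assert (Jln : forall i, C1x_on n barrier_dom (fun x t => ln (s t + -1 * f i x t))
     (fun x t => vscale (/ (s t + -1 * f i x t)) (vadd (fun _ => 0) (vscale (-1) (gf i x t))))).
  { intros i. apply (C1x_on_comp n barrier_dom _ _ ln Rinv (fun y => - / (y * y))). apply slack_C1.
    intros x t Hx. assert (H := slack_pos x t i Hx).
    split; [apply derivable_pt_lim_ln; auto|apply is_derive_Reals; auto_derive; try lra; field; lra]. }
  assert (JP := C1x_on_plus _ _ _ _ _ _ (proj1 f0_C1) (C1x_on_scal _ _ (-1) _ _
                  (C1x_on_mult _ _ _ _ _ _ inv_c_C1 (C1x_on_sumF _ _ p _ _ Jln)))).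
  eapply C1x_on_ext; [| |exact JP].
  - intros x t. unfold Phi_t. simpl.
    rewrite (sumF_ext p (fun i => ln (s t + -1 * f i x t)) (fun i => ln (s t - f i x t))). ring.
    intros i. f_equal. ring.
  - intros x t j Hx. assert (Hct := c_pos t (barrier_dom_time _ _ Hx)).
    unfold grad_barrier, vscale, vadd. simpl.
    rewrite (sumF_ext p _ (fun i => - (/ (s t - f i x t) * gf i x t j))), sumF_opp.
    + field. lra.
    + intros i. replace (s t + -1 * f i x t) with (s t - f i x t) by ring. ring.
Qed.

Lemma grad_barrier_C1 j : exists DG, C1x_on n barrier_dom (fun x t => grad_barrier x t j) DG.
Proof.
  assert (Jinv : forall i, C1x_on n barrier_dom (fun x t => / (s t + -1 * f i x t))
     (fun x t => vscale (- / ((s t + -1 * f i x t) * (s t + -1 * f i x t)))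
                        (vadd (fun _ => 0) (vscale (-1) (gf i x t))))).
  { intros i. apply (C1x_on_comp n barrier_dom _ _ Rinv (fun y => - / (y * y)) (fun y => 2 / (y * y * y))).
    apply slack_C1. intros x t Hx. assert (H := slack_pos x t i Hx).
    split; apply is_derive_Reals; auto_derive; try nra; field; lra. }
  assert (Js := C1x_on_sumF _ _ p _ _ (fun i => C1x_on_mult _ _ _ _ _ _ (Jinv i) (proj2 (f_C1 i) j))).
  eexists. eapply C1x_on_ext; [| |exact (C1x_on_plus _ _ _ _ _ _ (proj2 f0_C1 j)
                                          (C1x_on_mult _ _ _ _ _ _ inv_c_C1 Js))].
  - intros x t. unfold grad_barrier. simpl. do 2 f_equal. apply sumF_ext. intros i.
    replace (s t + -1 * f i x t) with (s t - f i x t) by ring. auto.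
  - reflexivity.
Qed.

Variable gPhi : Vec n -> R -> Vec n.
Hypothesis gPhi_grad : forall x t, 0 <= t -> Dom_t f s t x ->
  has_grad (fun y => Phi_t f0 f c s y t) x (gPhi x t).

Lemma gPhi_eq_grad_barrier x t : barrier_dom x t -> gPhi x t = grad_barrier x t.
Proof.
  intros Hx. apply (has_grad_unique n (fun y => Phi_t f0 f c s y t) x).
  - apply gPhi_grad; apply Hx.
  - apply (proj1 barrier_C1), Hx.
Qed.

Lemma barrier_strongly_convex m : (forall x t, 0 <= t -> psd_lb (Hf0 x t) m) ->
  (forall i t, 0 <= t -> convex_fun (fun x => f i x t)) ->
  forall x y t, 0 <= t -> Dom_t f s t x -> Dom_t f s t y ->
  Phi_t f0 f c s x t + dot (gPhi x t) (vsub y x) + m / 2 * dot (vsub y x) (vsub y x)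
    <= Phi_t f0 f c s y t.
Proof.
  intros Hstrong Hconv x y t Ht Hx Hy.
  pose proof f0_smooth as [Hg0 [HH0 _]].
  assert (S0 := strongly_convex_first_order n (fun q => f0 q t) (fun q => gf0 q t) (fun q => Hf0 q t) m x y
                  (fun q => Hg0 q t Ht) (fun q => HH0 q t Ht) (fun q => Hstrong q t Ht)).
  set (B := fun q => Phi_t f0 f c s q t + -1 * f0 q t).
  assert (HB : has_grad B x (vadd (gPhi x t) (vscale (-1) (gf0 x t)))).
  { apply has_grad_plus; auto.
    apply (has_grad_comp n (fun q => f0 q t) x (gf0 x t) (fun w => -1 * w)); auto.
    apply is_derive_Reals; auto_derive; auto; ring. }
  (* the log-barrier part of Phi is convex: ln is concave and increasing *)
  assert (HBc : forall a, 0 < a <= 1 -> B (vadd x (vscale a (vsub y x))) <= (1 - a) * B x + a * B y).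
  { intros a Ha. set (q := vadd x (vscale a (vsub y x))).
    assert (Eq : q = vadd (vscale a y) (vscale (1 - a) x))
      by (apply functional_extensionality; intros i; unfold q, vadd, vscale, vsub; ring).
    assert (Hb : forall w, B w = - / c t * sumF p (fun i => ln (s t - f i w t)))
      by (intros w; unfold B, Phi_t; ring).
    rewrite !Hb.
    assert (Hl : a * sumF p (fun i => ln (s t - f i y t)) + (1 - a) * sumF p (fun i => ln (s t - f i x t))
                 <= sumF p (fun i => ln (s t - f i q t))).
    { rewrite <- !sumF_scal, <- sumF_plus. apply sumF_le. intros i.
      assert (Hfi := Hconv i t Ht y x a ltac:(lra)). simpl in Hfi. rewrite <- Eq in Hfi.
      specialize (Hx i). specialize (Hy i).
      eapply Rle_trans; [apply ln_concave; lra|].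
      apply ln_le; nra. }
    assert (0 < / c t) by (apply Rinv_0_lt_compat; auto).
    nra. }
  assert (Hcf := convex_first_order n B x y _ HB HBc).
  rewrite dot_plus_l, dot_scal_l in Hcf. unfold B in Hcf. cbv beta in S0. lra.
Qed.

Variables (HPhi : Vec n -> R -> Mat n) (gtPhi : Vec n -> R -> Vec n).
Hypothesis HPhi_hess : forall x t, 0 <= t -> Dom_t f s t x -> has_hess (fun y => gPhi y t) x (HPhi x t).
Hypothesis gtPhi_deriv : forall x t, 0 <= t -> Dom_t f s t x ->
  forall j, has_deriv_nonneg (fun u => gPhi x u j) t (gtPhi x t j).

Lemma grad_barrier_along_curve (z zd : R -> Vec n) t j : 0 <= t ->
  (forall v, 0 <= v -> Dom_t f s v (z v)) ->
  (forall i, has_deriv_nonneg (fun u => z u i) t (zd t i)) ->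
  has_deriv_nonneg (fun v => gPhi (z v) v j) t (dot (HPhi (z t) t j) (zd t) + gtPhi (z t) t j).
Proof.
  intros Ht Hzdom Hzd.
  assert (HU : barrier_dom (z t) t) by (split; auto).
  destruct (grad_barrier_C1 j) as [DG HDG].
  destruct (barrier_dom_open (z t) t HU) as [dU [HdU KU]].
  assert (Hnear_t : has_deriv_nonneg (fun v => grad_barrier (z t) v j) t (gtPhi (z t) t j)).
  { apply has_deriv_nonneg_eq_near with (fun v => gPhi (z t) v j); [exact Ht| |apply gtPhi_deriv; auto].
    exists dU. split; auto. intros v Hv Hvt. rewrite gPhi_eq_grad_barrier; auto.
    apply KU; auto. rewrite norm2_vsub_diag; auto. }
  assert (EH : HPhi (z t) t j = DG (z t) t).
  { apply (has_grad_unique n (fun y => gPhi y t j) (z t)).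
    - apply HPhi_hess; auto.
    - apply has_grad_eq_near with (fun y => grad_barrier y t j).
      + exists dU. split; auto. intros y Hy. rewrite gPhi_eq_grad_barrier; auto.
        apply KU; auto. rewrite Rminus_diag, Rabs_R0; auto.
      + apply (proj1 HDG), HU. }
  rewrite EH.
  apply has_deriv_nonneg_eq_near with (fun v => grad_barrier (z v) v j); [exact Ht| |].
  - exists 1. split. lra. intros v Hv _.
    rewrite gPhi_eq_grad_barrier; [|split]; auto.
  - exact (has_deriv_nonneg_chain n barrier_dom barrier_dom_open _ _ HDG z (zd t) t _ HU Hzd Hnear_t).
Qed.

End Barrier.
Theorem lemma5 (n p : nat)
  (* Assumption 1 *)
  (f0 : Vec n -> R -> R) (gf0 : Vec n -> R -> Vec n) (Hf0 : Vec n -> R -> Mat n)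
  (f0t : Vec n -> R -> R)
  (f : Fin.t p -> Vec n -> R -> R) (m : R)
  (Hf0smooth : C2x_C1t f0 gf0 Hf0 f0t)
  (Hfsmooth : forall i, exists gfi Hfi fti, C2x_C1t (f i) gfi Hfi fti)
  (Hm : 0 < m)
  (Hstrong : forall x t, 0 <= t -> psd_lb (Hf0 x t) m)
  (Hconv : forall i t, 0 <= t -> convex_fun (fun x => f i x t))
  (* c and s: continuously differentiable on [0,oo) *)
  (c s c' s' : R -> R)
  (Hc : forall t, 0 <= t -> 0 < c t)
  (Hs : forall t, 0 <= t -> 0 <= s t)
  (Hc' : forall t, 0 <= t -> has_deriv_nonneg c t (c' t))
  (Hs' : forall t, 0 <= t -> has_deriv_nonneg s t (s' t))
  (Hc'c : cont_nonneg c') (Hs'c : cont_nonneg s')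
  (* initial point and choice of s0 = s 0 *)
  (x0 : Vec n) (eps : R) (Heps : 0 < eps)
  (Hs0 : s 0 = (let M := maxF0 p (fun i => f i x0 0) in
                if Rle_dec M 0 then 0 else M + eps))
  (* derivatives of the barrier: gradient, Hessian, and time derivative
     of the gradient, on the domain D(t) *)
  (gPhi : Vec n -> R -> Vec n) (HPhi : Vec n -> R -> Mat n)
  (gtPhi : Vec n -> R -> Vec n)
  (HgPhi : forall x t, 0 <= t -> Dom_t f s t x ->
     has_grad (fun y => Phi_t f0 f c s y t) x (gPhi x t))
  (HHPhi : forall x t, 0 <= t -> Dom_t f s t x ->
     has_hess (fun y => gPhi y t) x (HPhi x t))
  (HgtPhi : forall x t, 0 <= t -> Dom_t f s t x ->
     forall j, has_deriv_nonneg (fun u => gPhi x u j) t (gtPhi x t j))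
  (* the minimiser z*(t) of Phi(., t) over D(t) *)
  (zstar : R -> Vec n)
  (Hzstar : forall t, 0 <= t -> Dom_t f s t (zstar t) /\
     forall x, Dom_t f s t x -> Phi_t f0 f c s (zstar t) t <= Phi_t f0 f c s x t)
  (* the gain matrix P >= sigma I, sigma > 0 *)
  (P : Mat n) (sigma : R) (Hsigma : 0 < sigma) (HP : psd_lb P sigma)
  (* the trajectory z with derivative zd solving the flow *)
  (z zd : R -> Vec n)
  (Hz0 : z 0 = x0)
  (Hzd : forall t, 0 <= t -> forall i, has_deriv_nonneg (fun u => z u i) t (zd t i))
  (Hflow : forall t, 0 <= t -> forall i,
     matvec (HPhi (z t) t) (zd t) i
       = - (matvec P (gPhi (z t) t) i + gtPhi (z t) t i))
  (Hzdom : forall t, 0 <= t -> Dom_t f s t (z t)) :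
  exists C, 0 <= C /\
    forall t, 0 <= t -> norm2 (vsub (z t) (zstar t)) <= C * exp (- sigma * t).
Proof.
  (* The choice of s 0 only serves to put x0 = z 0 in D(0), which the
     hypothesis Hzdom already provides; the constant is (2/m) |grad Phi(x0, 0)|. *)
  destruct (functional_choice _ Hfsmooth) as [gf Hgf].
  destruct (functional_choice (fun i Hfi => exists fti, C2x_C1t (f i) (gf i) Hfi fti) Hgf)
    as [Hf HHf].
  destruct (functional_choice _ HHf) as [ft Hft].
  set (u := fun t => gPhi (z t) t).
  assert (Hu : forall t, 0 <= t -> forall j, has_deriv_nonneg (fun v => u v j) t (- matvec P (u t) j)).
  { intros t Ht j.
    replace (- matvec P (u t) j) with (dot (HPhi (z t) t j) (zd t) + gtPhi (z t) t j)
      by (change (dot (HPhi (z t) t j) (zd t)) with (matvec (HPhi (z t) t) (zd t) j);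
          unfold u; rewrite Hflow by auto; ring).
    eapply grad_barrier_along_curve; eauto. }
  exists (2 / m * norm2 (u 0)). split.
  { apply Rmult_le_pos; [apply Rlt_le, Rdiv_lt_0_compat|apply norm2_nonneg]; lra. }
  intros t Ht. destruct (Hzstar t Ht) as [Hdom Hmin].
  assert (Hdist : norm2 (vsub (z t) (zstar t)) <= 2 / m * norm2 (u t)).
  { apply (dist_le_of_strongly_convex n (fun q => Phi_t f0 f c s q t)); auto.
    eapply barrier_strongly_convex; eauto. }
  assert (Hdecay := norm2_exp_decay n u P sigma HP Hu t Ht).
  assert (0 < 2 / m) by (apply Rdiv_lt_0_compat; lra).
  nra.
Qed.
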